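(* Let $q$ be a prime power, $m,\ell\ge1$, fix a monomial order on $\mathcal{L}_q(x,q^m)^\ell$, and let $B$ be a basis of a left submodule $M\subseteq\mathcal{L}_q(x,q^m)^\ell$. Then $B$ is a minimal basis if and only if the leading positions of the elements of $B$ are pairwise distinct.
   Context: Write $[i]:=q^i$. $\mathcal{L}_q(x,q^m)$ is the ring of $q$-linearized polynomials $\sum_i a_ix^{[i]}$ ($a_i\in\mathbb{F}_{q^m}$) under addition and composition $\circ$. $\mathcal{L}_q(x,q^m)^\ell$ is a left module via $h\circ[f_1\cdots f_\ell]=[h\circ f_1\cdots h\circ f_\ell]$; a left submodule is a subset closed under addition and under this left composition. Monomials are $x^{[k]}e_i$ ($x^{[k]}$ in coordinate $i$, $e_i$ the $i$-th unit vector). A monomial order is a total order $<$ on monomials such that $x^{[k]}e_i<x^{[j]}\circ(x^{[k]}e_i)=x^{[j+k]}e_i$ for all $j>0$, and $x^{[k]}e_i<x^{[k']}e_{i'}$ implies $x^{[j]}\circ(x^{[k]}e_i)<x^{[j]}\circ(x^{[k']}e_{i'})$ for all $j\ge0$. For nonzero $f$, $\mathrm{lm}(f)$ is the greatest monomial occurring in $f$ (with nonzero coefficient), $\mathrm{lt}(f)$ is that term with its coefficient, and $\mathrm{lpos}(f)$ is the coordinate of $\mathrm{lm}(f)$. Elements $f^{(1)},\dots,f^{(s)}$ are linearly independent if $\sum a_i\circ f^{(i)}=0$ with $a_i\in\mathcal{L}_q(x,q^m)$ implies all $a_i=0$; a basis of $M$ is a generating set of linearly independent elements. For nonzero $f^{(1)},\dots,f^{(s)}$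 and $F=\{f^{(1)},\dots,f^{(s)}\}$, $f$ reduces to $h$ modulo $F$ in one step if $h=f-\sum_{i}(b_ix^{[a_i]})\circ f^{(i)}$ (sum over some of the $f^{(i)}$) with $b_i\in\mathbb{F}_{q^m}$, $a_i\ge0$, $\mathrm{lm}(f)=x^{[a_i]}\circ\mathrm{lm}(f^{(i)})$ for each such $i$, and $\mathrm{lt}(f)=\sum_i(b_ix^{[a_i]})\circ\mathrm{lt}(f^{(i)})$; $f$ is minimal w.r.t. $F$ if it cannot be reduced modulo $F$. A basis $B$ is minimal if every $b\in B$ is minimal with respect to $B\setminus\{b\}$. *)

From HB Require Import structures.
From mathcomp Require Import all_boot all_order all_algebra all_field.
Set Implicit Arguments. Unset Strict Implicit. Unset Printing Implicit Defensive.
Import GRing.Theory.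
Local Open Scope ring_scope.

(* q-linearized polynomials over a finite field K: a polynomial p : {poly K}
   encodes  sum_i p`_i x^[i]  (coefficient i is that of x^{q^i}). *)

(* composition:  (f o g) = sum_{i,j} f_i g_j^(q^i) x^[i+j] *)
Definition lcomp (K : fieldType) (q : nat) (f g : {poly K}) : {poly K} :=
  \poly_(k < size f + size g) \sum_(i < k.+1) f`_i * (g`_(k - i)) ^+ (q ^ i).

Definition lvec (K : fieldType) (l : nat) := {ffun 'I_l -> {poly K}}.

Definition lmul (K : fieldType) (q l : nat) (h : {poly K}) (f : lvec K l)
  : lvec K l := [ffun i => lcomp q h (f i)].

(* monomials x^[k] e_i are encoded as pairs (k, i) *)
Definition monomial (l : nat) := (nat * 'I_l)%type.

Definition coef (K : fieldType) (l : nat) (f : lvec K l) (t : monomial l) : K :=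
  (f t.2)`_t.1.

Definition monomial_order (l : nat) (mlt : rel (monomial l)) : Prop :=
  [/\ irreflexive mlt, transitive mlt,
      (forall s t : monomial l, s != t -> mlt s t || mlt t s),
      (forall (k j : nat) (i : 'I_l), (0 < j)%N -> mlt (k, i) (j + k, i)%N) &
      (forall (k k' j : nat) (i i' : 'I_l),
          mlt (k, i) (k', i') -> mlt (j + k, i) (j + k', i'))].

Definition is_lm (K : fieldType) (l : nat) (mlt : rel (monomial l))
  (f : lvec K l) (t : monomial l) : Prop :=
  coef f t != 0 /\ forall t', coef f t' != 0 -> t' = t \/ mlt t' t.

Definition left_submodule (K : fieldType) (q l : nat) (M : lvec K l -> Prop) :=
  (forall f g, M f -> M g -> M (f + g)) /\
  (forall h f, M f -> M (lmul q h f)).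

Definition lcomb (K : fieldType) (q l : nat) (B : seq (lvec K l))
  (a : nat -> {poly K}) : lvec K l :=
  \sum_(i < size B) lmul q (a i) (nth 0 B i).

Definition lin_indep (K : fieldType) (q l : nat) (B : seq (lvec K l)) : Prop :=
  forall a : nat -> {poly K},
    lcomb q B a = 0 -> forall i, (i < size B)%N -> a i = 0.

Definition generates (K : fieldType) (q l : nat) (B : seq (lvec K l))
  (M : lvec K l -> Prop) : Prop :=
  forall f, M f <-> exists a : nat -> {poly K}, f = lcomb q B a.

Definition is_basis (K : fieldType) (q l : nat) (B : seq (lvec K l))
  (M : lvec K l -> Prop) : Prop :=
  generates q B M /\ lin_indep q B.

Definition lmon (K : fieldType) (b : K) (a : nat) : {poly K} := b%:P * 'X^a.

Definition reduces_to (K : fieldType) (q l : nat) (mlt : rel (monomial l))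
  (F : seq (lvec K l)) (f h : lvec K l) : Prop :=
  exists (S : {set 'I_(size F)}) (b : 'I_(size F) -> K) (a : 'I_(size F) -> nat)
         (t : 'I_(size F) -> monomial l) (tf : monomial l),
    [/\ is_lm mlt f tf,
        (forall i, i \in S -> is_lm mlt (nth 0 F i) (t i)),
        (forall i, i \in S -> tf = ((a i + (t i).1)%N, (t i).2)),
        coef f tf = \sum_(i in S) b i * (coef (nth 0 F i) (t i)) ^+ (q ^ a i) &
        h = f - \sum_(i in S) lmul q (lmon (b i) (a i)) (nth 0 F i)].

Definition minimal_wrt (K : fieldType) (q l : nat) (mlt : rel (monomial l))
  (F : seq (lvec K l)) (f : lvec K l) : Prop :=
  ~ exists h, reduces_to q mlt F f h.

Definition minimal_basis (K : fieldType) (q l : nat) (mlt : rel (monomial l))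
  (B : seq (lvec K l)) : Prop :=
  forall b, b \in B -> minimal_wrt q mlt (filter (predC1 b) B) b.

Definition distinct_lpos (K : fieldType) (l : nat) (mlt : rel (monomial l))
  (B : seq (lvec K l)) : Prop :=
  forall i j, (i < size B)%N -> (j < size B)%N -> i != j ->
    forall ti tj, is_lm mlt (nth 0 B i) ti -> is_lm mlt (nth 0 B j) tj ->
      ti.2 != tj.2.

From HB Require Import structures.
From mathcomp Require Import all_boot all_order all_algebra all_field.
Set Implicit Arguments. Unset Strict Implicit.
Import GRing.Theory.
Local Open Scope ring_scope.

(* A reduction step of [f] modulo [F] cancels the leading term of [f] against
   leading terms of elements of [F]; so [f] is reducible modulo [F] exactly when
   some element of [F] has its leading monomial at the position of lm(f) and of
   degree at most that of lm(f).  Since a basis has no repeated elements, no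
   element of a minimal basis then shares its leading position with another
   one, and conversely. *)

Lemma lcompC (K : fieldType) q (c : K) (g : {poly K}) :
  lcomp q c%:P g = c *: g.
Proof.
apply/polyP=> k; rewrite coef_poly coefZ big_ord_recl big1 ?addr0; last first.
  by move=> i _; rewrite coefC mul0r.
rewrite coefC /= expn0 expr1 subn0.
case: ltnP => // hk; rewrite nth_default ?mulr0 //.
by apply: leq_trans hk; rewrite leq_addl.
Qed.

Lemma lmulC (K : fieldType) q l (c : K) (f : lvec K l) :
  lmul q c%:P f = c *: f.
Proof. by apply/ffunP=> x; rewrite !ffunE lcompC. Qed.

Lemma lin_indep_uniq (K : fieldType) q l (B : seq (lvec K l)) :
  lin_indep q B -> uniq B.
Proof.
move=> hB; apply/(uniqPn 0) => -[i [j [ltij ltjB eqij]]].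
have ltiB := ltn_trans ltij ltjB.
pose a k : {poly K} := ((k == i)%:R - (k == j)%:R)%:P.
suff /hB/(_ i ltiB)/eqP : lcomb q B a = 0.
  by rewrite /a eqxx ltn_eqF // subr0 polyC_eq0 oner_eq0.
have pick_nth k0 (lt_k0 : (k0 < size B)%N) :
    \sum_(k < size B) (k == k0 :> nat)%:R *: B`_k = B`_k0.
  rewrite (bigD1 (Ordinal lt_k0)) //= eqxx scale1r big1 ?addr0 // => k nek.
  by rewrite -val_eqE /= in nek; rewrite (negbTE nek) scale0r.
rewrite /lcomb; under eq_bigr => k _ do rewrite lmulC scalerBl.
by rewrite sumrB !pick_nth // eqij subrr.
Qed.

Section Reduction.

Variables (K : fieldType) (q l : nat) (mlt : rel (monomial l)).
Implicit Types (F : seq (lvec K l)) (f g : lvec K l) (tf tg : monomial l).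

Lemma reduces_by_lm_divisor F f g tf tg :
  g \in F -> is_lm mlt f tf -> is_lm mlt g tg ->
  (tg.1 <= tf.1)%N -> tf.2 = tg.2 ->
  exists h, reduces_to q mlt F f h.
Proof.
move=> gF hf hg le_deg eq_pos.
have lt_gF : (index g F < size F)%N by rewrite index_mem.
pose n := Ordinal lt_gF.
have nth_n : nth 0 F n = g by rewrite nth_index.
pose c := coef f tf / coef g tg ^+ (q ^ (tf.1 - tg.1)).
eexists; exists [set n], (fun=> c), (fun=> tf.1 - tg.1)%N, (fun=> tg), tf.
split=> //.
- by move=> i; rewrite inE => /eqP ->; rewrite nth_n.
- by move=> i _ /=; rewrite subnK // -eq_pos; case: (tf).
- by rewrite big_set1 nth_n /c divfK // expf_neq0 //; case: hg.
Qed.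

Lemma reduces_to_lpos F f h :
  reduces_to q mlt F f h ->
  exists g tf tg, [/\ g \in F, is_lm mlt f tf, is_lm mlt g tg & tg.2 = tf.2].
Proof.
move=> [S [b [a [t [tf [hf hS hpos hcoef _]]]]]].
have [S0 | [i iS]] := set_0Vmem S.
  by case: hf; rewrite hcoef S0 big_set0 eqxx.
exists (nth 0 F i), tf, (t i).
by split; [exact: mem_nth | exact: hf | exact: hS | rewrite (hpos i iS)].
Qed.

End Reduction.

Lemma distinct_lposP (K : fieldType) l (mlt : rel (monomial l))
  (B : seq (lvec K l)) :
  uniq B ->
  distinct_lpos mlt B <->
  (forall f g, f \in B -> g \in B -> f != g -> forall tf tg,
     is_lm mlt f tf -> is_lm mlt g tg -> tf.2 != tg.2).
Proof.
move=> uB; split=> hd.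
- move=> f g fB gB nefg tf tg hf hg.
  apply: (hd (index f B) (index g B)); rewrite ?index_mem ?nth_index //.
  by apply: contra nefg => /eqP/(congr1 (nth 0 B)); rewrite !nth_index // => ->.
- move=> i j ltiB ltjB neij; apply: hd; rewrite ?mem_nth //.
  by rewrite nth_uniq.
Qed.

Local Close Scope ring_scope.

Theorem proposition17 (K : finFieldType) (q m l : nat)
  (hq : exists p e : nat, [/\ prime p, (0 < e)%N & q = p ^ e])
  (hK : #|K| = q ^ m) (hm : (0 < m)%N) (hl : (0 < l)%N)
  (mlt : rel (monomial l)) (hmlt : monomial_order mlt)
  (M : lvec K l -> Prop) (hM : left_submodule q M)
  (B : seq (lvec K l)) (hB : is_basis q B M) :
  minimal_basis q mlt B <-> distinct_lpos mlt B.
Proof.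
have uB := lin_indep_uniq hB.2.
apply: (iff_trans _ (iff_sym (distinct_lposP mlt uB))); split=> [hmin | hd].
- move=> f g fB gB nefg tf tg hf hg; apply/eqP=> eq_pos.
  have [le_gf | /ltnW le_fg] := leqP tg.1 tf.1.
  + apply: (hmin f fB); apply: (reduces_by_lm_divisor _ _ hf hg) => //.
    by rewrite mem_filter /= eq_sym nefg.
  + apply: (hmin g gB); apply: (reduces_by_lm_divisor _ _ hg hf) => //.
    by rewrite mem_filter /= nefg.
- move=> b bB [h /reduces_to_lpos] [g [tb [tg [+ hb hg eq_pos]]]].
  rewrite mem_filter /= => /andP [negb gB].
  by move: (hd g b gB bB negb tg tb hg hb); rewrite eq_pos eqxx.
Qed.
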